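(* Let $S$ be a Hausdorff semitopological semigroup. If $M$ is a maximal ideal of $Lmc(S)$, then $E(M)$ is an $e$-ultrafilter; and if $\mathcal{A}$ is an $e$-ultrafilter, then $E^-(\mathcal{A})$ is a maximal ideal of $Lmc(S)$. Consequently $M\mapsto E(M)$ is a bijection from the set of maximal ideals of $Lmc(S)$ onto the set of $e$-ultrafilters.
   Context: A Hausdorff semitopological semigroup is a semigroup $S$ with a Hausdorff topology such that all maps $\lambda_s(x)=sx$, $r_s(x)=xs$ are continuous. $\mathcal{CB}(S)$: bounded continuous complex functions with sup norm; $\beta S$ its spectrum with Gelfand topology; $L_sf(x)=f(sx)$, $(T_\mu f)(s)=\mu(L_sf)$; $Lmc(S)=\{f\in\mathcal{CB}(S):T_\mu f\in\mathcal{CB}(S)\ \forall \mu\in\beta S\}$. $Z(Lmc(S))=\{f^{-1}(0):f\in Lmc(S)\}$. $E_\epsilon(f)=\{x\in S:|f(x)|\le\epsilon\}$; $E(I)=\{E_\epsilon(f):f\in I,\epsilon>0\}$; $E^-(\mathcal{A})=\{f\in Lmc(S):E_\epsilon(f)\in\mathcal{A}\ \forall\epsilon>0\}$. A $z$-filter is $\mathcal{A}\subseteq Z(Lmc(S))$ with $\emptyset\notin\mathcal{A}$, $S\in\mathcal{A}$, closed under finite intersections and upward closed within $Z(Lmc(S))$. An $e$-filter is a $z$-filter $\mathcal{A}$ with $E(E^-(\mathcal{A}))=\mathcal{A}$; an $e$-ultrafilter is an $e$-filter not properly contained in any other $e$-filter. *)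

From Stdlib Require Import Reals.
Open Scope R_scope.

Record C : Type := mkC { Re : R ; Im : R }.
Definition C0 : C := mkC 0 0.
Definition C1 : C := mkC 1 0.
Definition Cadd (z w : C) : C := mkC (Re z + Re w) (Im z + Im w).
Definition Copp (z : C) : C := mkC (- Re z) (- Im z).
Definition Cmul (z w : C) : C :=
  mkC (Re z * Re w - Im z * Im w) (Re z * Im w + Im z * Re w).
Definition Cabs (z : C) : R := sqrt (Re z * Re z + Im z * Im z).

Definition is_topology {S : Type} (open : (S -> Prop) -> Prop) : Prop :=
  open (fun _ => True) /\
  (forall U V, open U -> open V -> open (fun x => U x /\ V x)) /\
  (forall (F : (S -> Prop) -> Prop), (forall U, F U -> open U) ->
     open (fun x => exists U, F U /\ U x)).

Definition hausdorff {S : Type} (open : (S -> Prop) -> Prop) : Prop :=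
  forall x y : S, x <> y ->
    exists U V, open U /\ open V /\ U x /\ V y /\ (forall z, ~ (U z /\ V z)).

Definition continuous_map {S : Type} (open : (S -> Prop) -> Prop) (g : S -> S) : Prop :=
  forall U, open U -> open (fun x => U (g x)).

Definition semitop_semigroup {S : Type} (mul : S -> S -> S)
  (open : (S -> Prop) -> Prop) : Prop :=
  is_topology open /\ hausdorff open /\
  (forall x y z, mul x (mul y z) = mul (mul x y) z) /\
  (forall s, continuous_map open (fun x => mul s x)) /\
  (forall s, continuous_map open (fun x => mul x s)).

Definition continuous_C {S : Type} (open : (S -> Prop) -> Prop) (f : S -> C) : Prop :=
  forall x eps, 0 < eps ->
    exists U, open U /\ U x /\ forall y, U y -> Cabs (Cadd (f y) (Copp (f x))) < eps.

Definition CB {S : Type} (open : (S -> Prop) -> Prop) (f : S -> C) : Prop :=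
  continuous_C open f /\ exists K, forall x, Cabs (f x) <= K.

Definition fadd {S : Type} (f g : S -> C) : S -> C := fun x => Cadd (f x) (g x).
Definition fmul {S : Type} (f g : S -> C) : S -> C := fun x => Cmul (f x) (g x).
Definition fscal {S : Type} (c : C) (f : S -> C) : S -> C := fun x => Cmul c (f x).
Definition fzero {S : Type} : S -> C := fun _ => C0.

(** * Spectrum betaS of CB(S): nonzero multiplicative complex-linear functionals
    on CB(S) (values outside CB(S) are irrelevant). *)
Definition in_betaS {S : Type} (open : (S -> Prop) -> Prop) (mu : (S -> C) -> C) : Prop :=
  (forall f g, CB open f -> CB open g -> mu (fadd f g) = Cadd (mu f) (mu g)) /\
  (forall c f, CB open f -> mu (fscal c f) = Cmul c (mu f)) /\
  (forall f g, CB open f -> CB open g -> mu (fmul f g) = Cmul (mu f) (mu g)) /\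
  (exists f, CB open f /\ mu f <> C0).

Definition Lshift {S : Type} (mul : S -> S -> S) (s : S) (f : S -> C) : S -> C :=
  fun x => f (mul s x).
Definition Tmu {S : Type} (mul : S -> S -> S) (mu : (S -> C) -> C) (f : S -> C) : S -> C :=
  fun s => mu (Lshift mul s f).

Definition Lmc {S : Type} (mul : S -> S -> S) (open : (S -> Prop) -> Prop) (f : S -> C) : Prop :=
  CB open f /\ forall mu, in_betaS open mu -> CB open (Tmu mul mu f).

Definition is_ideal {S : Type} (mul : S -> S -> S) (open : (S -> Prop) -> Prop)
  (I : (S -> C) -> Prop) : Prop :=
  (forall f, I f -> Lmc mul open f) /\
  I fzero /\
  (forall f g, I f -> I g -> I (fadd f g)) /\
  (forall h f, Lmc mul open h -> I f -> I (fmul h f)).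

Definition proper_ideal {S : Type} (mul : S -> S -> S) (open : (S -> Prop) -> Prop)
  (I : (S -> C) -> Prop) : Prop :=
  is_ideal mul open I /\ exists f, Lmc mul open f /\ ~ I f.

Definition maximal_ideal {S : Type} (mul : S -> S -> S) (open : (S -> Prop) -> Prop)
  (M : (S -> C) -> Prop) : Prop :=
  proper_ideal mul open M /\
  forall J, proper_ideal mul open J -> (forall f, M f -> J f) -> forall f, J f -> M f.

Definition zero_set {S : Type} (f : S -> C) : S -> Prop := fun x => f x = C0.

Definition ZLmc {S : Type} (mul : S -> S -> S) (open : (S -> Prop) -> Prop)
  (Z : S -> Prop) : Prop :=
  exists f, Lmc mul open f /\ Z = zero_set f.

Definition Eeps {S : Type} (eps : R) (f : S -> C) : S -> Prop :=
  fun x => Cabs (f x) <= eps.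

Definition Efam {S : Type} (I : (S -> C) -> Prop) : (S -> Prop) -> Prop :=
  fun Z => exists f eps, I f /\ 0 < eps /\ Z = Eeps eps f.

Definition Eminus {S : Type} (mul : S -> S -> S) (open : (S -> Prop) -> Prop)
  (A : (S -> Prop) -> Prop) : (S -> C) -> Prop :=
  fun f => Lmc mul open f /\ forall eps, 0 < eps -> A (Eeps eps f).

Definition z_filter {S : Type} (mul : S -> S -> S) (open : (S -> Prop) -> Prop)
  (A : (S -> Prop) -> Prop) : Prop :=
  (forall Z, A Z -> ZLmc mul open Z) /\
  ~ A (fun _ => False) /\
  A (fun _ => True) /\
  (forall Z1 Z2, A Z1 -> A Z2 -> A (fun x => Z1 x /\ Z2 x)) /\
  (forall Z1 Z2, A Z1 -> ZLmc mul open Z2 -> (forall x, Z1 x -> Z2 x) -> A Z2).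

Definition e_filter {S : Type} (mul : S -> S -> S) (open : (S -> Prop) -> Prop)
  (A : (S -> Prop) -> Prop) : Prop :=
  z_filter mul open A /\
  forall Z, Efam (Eminus mul open A) Z <-> A Z.

Definition e_ultrafilter {S : Type} (mul : S -> S -> S) (open : (S -> Prop) -> Prop)
  (A : (S -> Prop) -> Prop) : Prop :=
  e_filter mul open A /\
  forall B, e_filter mul open B -> (forall Z, A Z -> B Z) -> forall Z, B Z -> A Z.

(** The analytic input is that Lmc(S) is stable under continuous pointwise
    operations (sums, products, conjugation, [1/k] for [k] bounded below,
    truncations of moduli).  We formalise "continuous and bounded on bounded
    sets" as [tame], prove that characters [mu] of CB(S) commute with tame
    operations (otherwise a sum of squared deviations would be an invertible
    function killed by [mu]), and deduce that [T_mu] does too.  Algebraically,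
    a proper ideal contains no function bounded below by a positive constant.
    Then:
    - every proper ideal [J] generates an e-filter [efilter_of J] (zero sets
      containing some [E_d(g)], [g] in [J]), and [E^-(A)] is a proper ideal for
      every z-filter [A];
    - a maximal ideal [M] is closed under "each [E_eps(f)] contains some
      [E_d(g)], [g] in [M]", whence [E(M) = efilter_of M];
    - the two maps are then mutually inverse and order-preserving, which gives
      the theorem. *)

From Stdlib Require Import Reals Lra Classical FunctionalExtensionality PropExtensionality.
Open Scope R_scope.

Notation Cdist z w := (Cabs (Cadd z (Copp w))).

Lemma Cext z w : Re z = Re w -> Im z = Im w -> z = w.
Proof. destruct z, w; simpl; intros; subst; reflexivity. Qed.

Lemma Cabs_ge0 z : 0 <= Cabs z.
Proof. apply sqrt_pos. Qed.

Lemma Cabs_sq z : Cabs z * Cabs z = Re z * Re z + Im z * Im z.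
Proof. apply sqrt_sqrt; nra. Qed.

Lemma le_of_sq a b : 0 <= b -> a * a <= b * b -> a <= b.
Proof. intros; nra. Qed.

Lemma Re_le z : Rabs (Re z) <= Cabs z.
Proof.
  apply le_of_sq; [apply Cabs_ge0|].
  rewrite Cabs_sq, <- Rabs_mult, Rabs_pos_eq; nra.
Qed.

Lemma Im_le z : Rabs (Im z) <= Cabs z.
Proof.
  apply le_of_sq; [apply Cabs_ge0|].
  rewrite Cabs_sq, <- Rabs_mult, Rabs_pos_eq; nra.
Qed.

Lemma Cabs_le_sum z : Cabs z <= Rabs (Re z) + Rabs (Im z).
Proof.
  pose proof (Rabs_pos (Re z)); pose proof (Rabs_pos (Im z)).
  apply le_of_sq; [lra|].
  rewrite Cabs_sq, <- (Rabs_pos_eq (Re z * Re z)), <- (Rabs_pos_eq (Im z * Im z)),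
    !Rabs_mult by nra.
  nra.
Qed.

Lemma Cabs_nonneg_real a : 0 <= a -> Cabs (mkC a 0) = a.
Proof. intro Ha. unfold Cabs; simpl. rewrite Rmult_0_l, Rplus_0_r. now apply sqrt_square. Qed.

Lemma Cabs_C0 : Cabs C0 = 0.
Proof. apply Cabs_nonneg_real; lra. Qed.

Lemma Cabs_C1 : Cabs C1 = 1.
Proof. apply Cabs_nonneg_real; lra. Qed.

Lemma Cabs_eq0 z : Cabs z = 0 -> z = C0.
Proof. intro H. pose proof (Cabs_sq z) as E. rewrite H in E. apply Cext; simpl; nra. Qed.

Lemma Cabs_pos z : z <> C0 -> 0 < Cabs z.
Proof. intro H. destruct (Cabs_ge0 z) as [|E]; auto. exfalso. now apply H, Cabs_eq0. Qed.

Lemma Cabs_mul z w : Cabs (Cmul z w) = Cabs z * Cabs w.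
Proof. unfold Cabs. rewrite <- sqrt_mult_alt by nra. f_equal. simpl. ring. Qed.

Lemma cauchy_schwarz2 x y u v a b : 0 <= a -> 0 <= b ->
  a * a = x * x + u * u -> b * b = y * y + v * v -> x * y + u * v <= a * b.
Proof.
  intros Ha Hb Ha2 Hb2.
  destruct (Rle_dec (x * y + u * v) 0); [nra|].
  apply le_of_sq; [nra|].
  replace (a * b * (a * b)) with ((a * a) * (b * b)) by ring. rewrite Ha2, Hb2.
  pose proof (Rle_0_sqr (x * v - u * y)); unfold Rsqr in *. nra.
Qed.

Lemma Cabs_triangle z w : Cabs (Cadd z w) <= Cabs z + Cabs w.
Proof.
  pose proof (Cabs_ge0 z); pose proof (Cabs_ge0 w).
  apply le_of_sq; [lra|].
  pose proof (cauchy_schwarz2 (Re z) (Re w) (Im z) (Im w) _ _ (Cabs_ge0 z) (Cabs_ge0 w)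
    (Cabs_sq z) (Cabs_sq w)).
  rewrite Cabs_sq. pose proof (Cabs_sq z); pose proof (Cabs_sq w). simpl. nra.
Qed.

Lemma Cdist_sym a b : Cdist a b = Cdist b a.
Proof. unfold Cabs; simpl; f_equal; ring. Qed.

Lemma Cdist_triangle a b c : Cdist a c <= Cdist a b + Cdist b c.
Proof.
  replace (Cadd a (Copp c)) with (Cadd (Cadd a (Copp b)) (Cadd b (Copp c)))
    by (apply Cext; simpl; ring).
  apply Cabs_triangle.
Qed.

Lemma Cabs_reverse_triangle a b : Rabs (Cabs a - Cabs b) <= Cdist a b.
Proof.
  assert (Ca : Cabs a <= Cdist a b + Cabs b).
  { replace a with (Cadd (Cadd a (Copp b)) b) at 1 by (apply Cext; simpl; ring).
    apply Cabs_triangle. }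
  assert (Cb : Cabs b <= Cdist b a + Cabs a).
  { replace b with (Cadd (Cadd b (Copp a)) a) at 1 by (apply Cext; simpl; ring).
    apply Cabs_triangle. }
  rewrite Cdist_sym in Cb. apply Rabs_le; lra.
Qed.

Lemma Cmul_fixed_one x y : y <> C0 -> Cmul x y = y -> x = C1.
Proof.
  intros Hy E. pose proof (Cabs_pos y Hy). pose proof (Cabs_sq y).
  assert (N : 0 < Re y * Re y + Im y * Im y) by nra.
  assert (E1 : Re (Cmul x y) = Re y) by now rewrite E.
  assert (E2 : Im (Cmul x y) = Im y) by now rewrite E.
  simpl in E1, E2.
  assert (A : (Re x - 1) * (Re y * Re y + Im y * Im y) = 0).
  { replace ((Re x - 1) * (Re y * Re y + Im y * Im y)) with
      (Re y * (Re x * Re y - Im x * Im y - Re y) + Im y * (Re x * Im y + Im x * Re y - Im y))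
      by ring.
    rewrite E1, E2. ring. }
  assert (B : Im x * (Re y * Re y + Im y * Im y) = 0).
  { replace (Im x * (Re y * Re y + Im y * Im y)) with
      (- Im y * (Re x * Re y - Im x * Im y - Re y) + Re y * (Re x * Im y + Im x * Re y - Im y))
      by ring.
    rewrite E1, E2. ring. }
  apply Rmult_integral in A; apply Rmult_integral in B.
  apply Cext; simpl; lra.
Qed.

(** * Tame functions of two complex variables

    Tame functions are exactly what is needed to
    push bounded continuous functions through pointwise operations and to
    commute with the characters of CB(S). *)

Definition tameR (r : C -> C -> R) : Prop :=
  (forall z w eps, 0 < eps -> exists d, 0 < d /\ forall z' w',
     Cdist z' z < d -> Cdist w' w < d -> Rabs (r z' w' - r z w) < eps) /\
  (forall K, exists K', forall z w, Cabs z <= K -> Cabs w <= K -> Rabs (r z w) <= K').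

Definition tame (h : C -> C -> C) : Prop :=
  tameR (fun z w => Re (h z w)) /\ tameR (fun z w => Im (h z w)).

Lemma Cdist_C0 z : Cdist z C0 = Cabs z.
Proof. f_equal. apply Cext; simpl; ring. Qed.

Lemma tameR_lipschitz r :
  (forall z w z' w', Rabs (r z' w' - r z w) <= Cdist z' z + Cdist w' w) -> tameR r.
Proof.
  intro Lip. split.
  - intros z w eps He. exists (eps / 2). split; [lra|].
    intros z' w' Hz Hw. specialize (Lip z w z' w'). lra.
  - intro K. exists (Rabs (r C0 C0) + 2 * K). intros z w Hz Hw.
    specialize (Lip C0 C0 z w). rewrite !Cdist_C0 in Lip.
    pose proof (Rabs_triang_inv (r z w) (r C0 C0)). lra.
Qed.

Lemma tameR_comp1 (g : R -> R) L r : 0 < L ->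
  (forall a b, Rabs (g a - g b) <= L * Rabs (a - b)) -> tameR r ->
  tameR (fun z w => g (r z w)).
Proof.
  intros HL Lip [Cont Bnd]. split.
  - intros z w eps He.
    destruct (Cont z w (eps / L)) as [d [Hd P]]; [apply Rdiv_lt_0_compat; lra|].
    exists d. split; [exact Hd|]. intros z' w' Hz Hw.
    specialize (P z' w' Hz Hw). specialize (Lip (r z' w') (r z w)).
    apply Rmult_lt_compat_l with (r := L) in P; [|exact HL].
    replace (L * (eps / L)) with eps in P by (field; lra). lra.
  - intro K. destruct (Bnd K) as [K' HK]. exists (Rabs (g 0) + L * K').
    intros z w Hz Hw. specialize (HK z w Hz Hw). specialize (Lip (r z w) 0).
    rewrite Rminus_0_r in Lip. pose proof (Rabs_triang_inv (g (r z w)) (g 0)).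
    assert (L * Rabs (r z w) <= L * K') by (apply Rmult_le_compat_l; lra). lra.
Qed.

Lemma tameR_plus r1 r2 : tameR r1 -> tameR r2 -> tameR (fun z w => r1 z w + r2 z w).
Proof.
  intros [C1 B1] [C2 B2]. split.
  - intros z w eps He.
    destruct (C1 z w (eps / 2)) as [d1 [Hd1 P1]]; [lra|].
    destruct (C2 z w (eps / 2)) as [d2 [Hd2 P2]]; [lra|].
    exists (Rmin d1 d2). split; [now apply Rmin_pos|]. intros z' w' Hz Hw.
    pose proof (Rmin_l d1 d2); pose proof (Rmin_r d1 d2).
    specialize (P1 z' w' ltac:(lra) ltac:(lra)). specialize (P2 z' w' ltac:(lra) ltac:(lra)).
    pose proof (Rabs_triang (r1 z' w' - r1 z w) (r2 z' w' - r2 z w)).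
    replace (r1 z' w' + r2 z' w' - (r1 z w + r2 z w))
      with (r1 z' w' - r1 z w + (r2 z' w' - r2 z w)) by ring. lra.
  - intro K. destruct (B1 K) as [K1 Bd1]. destruct (B2 K) as [K2 Bd2].
    exists (K1 + K2). intros z w Hz Hw.
    specialize (Bd1 z w Hz Hw). specialize (Bd2 z w Hz Hw).
    pose proof (Rabs_triang (r1 z w) (r2 z w)). lra.
Qed.

Lemma Rmult_near a b x y d : Rabs (x - a) <= d -> Rabs (y - b) <= d -> d <= 1 ->
  Rabs (x * y - a * b) <= d * (Rabs a + Rabs b + 1).
Proof.
  intros Hx Hy Hd.
  replace (x * y - a * b) with ((x - a) * (y - b) + (x - a) * b + a * (y - b)) by ring.
  pose proof (Rabs_triang ((x - a) * (y - b) + (x - a) * b) (a * (y - b))).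
  pose proof (Rabs_triang ((x - a) * (y - b)) ((x - a) * b)).
  rewrite !Rabs_mult in *.
  pose proof (Rabs_pos (x - a)); pose proof (Rabs_pos (y - b)).
  pose proof (Rabs_pos a); pose proof (Rabs_pos b). nra.
Qed.

Lemma tameR_mult r1 r2 : tameR r1 -> tameR r2 -> tameR (fun z w => r1 z w * r2 z w).
Proof.
  intros [C1 B1] [C2 B2]. split.
  - intros z w eps He.
    set (N := Rabs (r1 z w) + Rabs (r2 z w) + 1).
    assert (HN : 0 < N) by (unfold N; pose proof (Rabs_pos (r1 z w));
                             pose proof (Rabs_pos (r2 z w)); lra).
    set (e := Rmin 1 (eps / (2 * N))).
    assert (He1 : e <= 1) by apply Rmin_l.
    assert (He2 : e * N <= eps / 2).
    { apply Rle_trans with (eps / (2 * N) * N).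
      - apply Rmult_le_compat_r; [lra|apply Rmin_r].
      - right; field; lra. }
    assert (Hepos : 0 < e) by (apply Rmin_pos; [lra|apply Rdiv_lt_0_compat; lra]).
    destruct (C1 z w e Hepos) as [d1 [Hd1 P1]].
    destruct (C2 z w e Hepos) as [d2 [Hd2 P2]].
    exists (Rmin d1 d2). split; [now apply Rmin_pos|]. intros z' w' Hz Hw.
    pose proof (Rmin_l d1 d2); pose proof (Rmin_r d1 d2).
    specialize (P1 z' w' ltac:(lra) ltac:(lra)). specialize (P2 z' w' ltac:(lra) ltac:(lra)).
    pose proof (Rmult_near (r1 z w) (r2 z w) (r1 z' w') (r2 z' w') e
                  ltac:(lra) ltac:(lra) He1) as Est.
    fold N in Est. lra.
  - intro K. destruct (B1 K) as [K1 Bd1]. destruct (B2 K) as [K2 Bd2].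
    exists (K1 * K2). intros z w Hz Hw.
    specialize (Bd1 z w Hz Hw). specialize (Bd2 z w Hz Hw).
    rewrite Rabs_mult. apply Rmult_le_compat; auto using Rabs_pos.
Qed.

Lemma tameR_opp r : tameR r -> tameR (fun z w => - r z w).
Proof.
  apply (tameR_comp1 Ropp 1); [lra|]. intros a b.
  replace (- a - - b) with (- (a - b)) by ring. rewrite Rabs_Ropp. lra.
Qed.

Lemma tameR_minus r1 r2 : tameR r1 -> tameR r2 -> tameR (fun z w => r1 z w - r2 z w).
Proof. intros. unfold Rminus. apply tameR_plus; [|apply tameR_opp]; assumption. Qed.

Lemma tameR_max c r : tameR r -> tameR (fun z w => Rmax (r z w) c).
Proof.
  apply (tameR_comp1 (fun a => Rmax a c) 1); [lra|]. intros a b.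
  unfold Rmax; repeat destruct Rle_dec; unfold Rabs; repeat destruct Rcase_abs; lra.
Qed.

Lemma tameR_min c r : tameR r -> tameR (fun z w => Rmin (r z w) c).
Proof.
  apply (tameR_comp1 (fun a => Rmin a c) 1); [lra|]. intros a b.
  unfold Rmin; repeat destruct Rle_dec; unfold Rabs; repeat destruct Rcase_abs; lra.
Qed.

(** [a |-> / max a c] is [1/c^2]-Lipschitz, hence preserves tameness. *)
Lemma tameR_inv_max c r : 0 < c -> tameR r -> tameR (fun z w => / Rmax (r z w) c).
Proof.
  intro Hc. apply (tameR_comp1 (fun a => / Rmax a c) (/ (c * c))).
  { apply Rinv_0_lt_compat; nra. }
  intros a b.
  assert (Ha : c <= Rmax a c) by apply Rmax_r. assert (Hb : c <= Rmax b c) by apply Rmax_r.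
  assert (Lip : Rabs (Rmax b c - Rmax a c) <= Rabs (a - b)).
  { unfold Rmax; repeat destruct Rle_dec; unfold Rabs; repeat destruct Rcase_abs; lra. }
  replace (/ Rmax a c - / Rmax b c) with ((Rmax b c - Rmax a c) * / (Rmax a c * Rmax b c))
    by (field; lra).
  rewrite Rabs_mult, (Rabs_pos_eq (/ _)) by (left; apply Rinv_0_lt_compat; nra).
  rewrite Rmult_comm. apply Rmult_le_compat; auto using Rabs_pos.
  - left. apply Rinv_0_lt_compat. nra.
  - apply Rinv_le_contravar; nra.
Qed.

Lemma tameR_const c : tameR (fun _ _ => c).
Proof.
  apply tameR_lipschitz. intros. rewrite Rminus_diag, Rabs_R0.
  pose proof (Cabs_ge0 (Cadd z' (Copp z))); pose proof (Cabs_ge0 (Cadd w' (Copp w))). lra.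
Qed.

Lemma tameR_left (p : C -> R) : (forall z z', Rabs (p z' - p z) <= Cdist z' z) ->
  tameR (fun z _ => p z).
Proof.
  intro Lip. apply tameR_lipschitz. intros z w z' w'.
  pose proof (Lip z z'); pose proof (Cabs_ge0 (Cadd w' (Copp w))). lra.
Qed.

Lemma tameR_right (p : C -> R) : (forall w w', Rabs (p w' - p w) <= Cdist w' w) ->
  tameR (fun _ w => p w).
Proof.
  intro Lip. apply tameR_lipschitz. intros z w z' w'.
  pose proof (Lip w w'); pose proof (Cabs_ge0 (Cadd z' (Copp z))). lra.
Qed.

Lemma Re_lipschitz z z' : Rabs (Re z' - Re z) <= Cdist z' z.
Proof. apply (Re_le (Cadd z' (Copp z))). Qed.

Lemma Im_lipschitz z z' : Rabs (Im z' - Im z) <= Cdist z' z.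
Proof. apply (Im_le (Cadd z' (Copp z))). Qed.

Lemma Cabs_lipschitz z z' : Rabs (Cabs z' - Cabs z) <= Cdist z' z.
Proof. apply Cabs_reverse_triangle. Qed.

Ltac tame_solve :=
  unfold tame; simpl; split;
  repeat first
    [ apply tameR_plus | apply tameR_minus | apply tameR_mult | apply tameR_opp
    | apply tameR_max | apply tameR_min | (apply tameR_inv_max; [assumption|])
    | apply tameR_const
    | apply (tameR_left Re Re_lipschitz) | apply (tameR_left Im Im_lipschitz)
    | apply (tameR_left Cabs Cabs_lipschitz)
    | apply (tameR_right Re Re_lipschitz) | apply (tameR_right Im Im_lipschitz)
    | apply (tameR_right Cabs Cabs_lipschitz) ].

Lemma tame_add : tame Cadd.
Proof. tame_solve. Qed.

Lemma tame_mul : tame Cmul.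
Proof. tame_solve. Qed.

Lemma tame_conj : tame (fun z _ => mkC (Re z) (- Im z)).
Proof. tame_solve. Qed.

Lemma tame_sub a : tame (fun z _ => Cadd z (Copp a)).
Proof. tame_solve. Qed.

Lemma tame_recip m : 0 < m -> tame (fun z _ => mkC (/ Rmax (Re z) m) 0).
Proof. intro. tame_solve. Qed.

Lemma tame_excess eta : tame (fun z _ => mkC (Rmax (Cabs z - eta) 0) 0).
Proof. tame_solve. Qed.

Lemma tame_capped_sum d : tame (fun z w => mkC (Rmin (Cabs z) d + Cabs w) 0).
Proof. tame_solve. Qed.

(** Continuity of a tame [h] at [(a, b)], in the quantitative form used to
    show that characters commute with [h]: if [c <> h a b], the quantity
    [|z - a|^2 + |w - b|^2 + |h z w - c|^2] is bounded away from 0. *)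
Lemma tame_separation h a b c : tame h -> c <> h a b ->
  exists m, 0 < m /\ forall z w,
    m <= Cdist z a * Cdist z a + Cdist w b * Cdist w b + Cdist (h z w) c * Cdist (h z w) c.
Proof.
  intros [[ContRe _] [ContIm _]] Hc.
  set (e := Cdist c (h a b)).
  assert (He : 0 < e).
  { apply Cabs_pos. intro Z. apply Hc.
    assert (ZRe : Re (Cadd c (Copp (h a b))) = 0) by now rewrite Z.
    assert (ZIm : Im (Cadd c (Copp (h a b))) = 0) by now rewrite Z.
    simpl in ZRe, ZIm. apply Cext; lra. }
  destruct (ContRe a b (e / 4)) as [d1 [Hd1 P1]]; [lra|].
  destruct (ContIm a b (e / 4)) as [d2 [Hd2 P2]]; [lra|].
  set (d := Rmin d1 d2).
  assert (Hd : 0 < d) by now apply Rmin_pos.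
  assert (d <= d1) by apply Rmin_l. assert (d <= d2) by apply Rmin_r.
  exists (Rmin (d * d) (e * e / 4)). split; [apply Rmin_pos; nra|]. intros z w.
  pose proof (Rmin_l (d * d) (e * e / 4)); pose proof (Rmin_r (d * d) (e * e / 4)).
  pose proof (Cabs_ge0 (Cadd z (Copp a))); pose proof (Cabs_ge0 (Cadd w (Copp b))).
  pose proof (Cabs_ge0 (Cadd (h z w) (Copp c))).
  destruct (Rlt_dec (Cdist z a) d) as [Lz|Lz]; [|nra].
  destruct (Rlt_dec (Cdist w b) d) as [Lw|Lw]; [|nra].
  specialize (P1 z w ltac:(lra) ltac:(lra)). specialize (P2 z w ltac:(lra) ltac:(lra)).
  assert (Near : Cdist (h z w) (h a b) < e / 2).
  { eapply Rle_lt_trans; [apply Cabs_le_sum|]. simpl. unfold Rminus in P1, P2. lra. }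
  pose proof (Cdist_triangle c (h z w) (h a b)) as T.
  rewrite (Cdist_sym c (h z w)) in T. fold e in T. nra.
Qed.

Definition conjf {S : Type} (u : S -> C) : S -> C := fun x => mkC (Re (u x)) (- Im (u x)).

(** [normsq u = |u|^2], an element of every ideal containing [u]. *)
Definition normsq {S : Type} (u : S -> C) : S -> C := fmul (conjf u) u.

Lemma normsq_pt {S : Type} (u : S -> C) x : normsq u x = mkC (Cabs (u x) * Cabs (u x)) 0.
Proof. unfold normsq, fmul, conjf. apply Cext; simpl; [rewrite Cabs_sq|]; ring. Qed.

Definition uniformly_positive {S : Type} (m : R) (k : S -> C) : Prop :=
  forall x, Im (k x) = 0 /\ m <= Re (k x).

(** The reciprocal [1 / k] of a function bounded below by [m > 0], written so
    that it is visibly a tame function of [k]. *)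
Definition recip {S : Type} (m : R) (k : S -> C) : S -> C :=
  fun x => mkC (/ Rmax (Re (k x)) m) 0.

Lemma recip_inverse {S : Type} m (k : S -> C) : 0 < m -> uniformly_positive m k ->
  fmul (recip m k) k = fun _ => C1.
Proof.
  intros Hm Hk. apply functional_extensionality; intro x. unfold fmul, recip.
  destruct (Hk x) as [Hi Hr]. rewrite Rmax_left by lra.
  apply Cext; simpl; rewrite Hi; field; lra.
Qed.

Lemma recip_mul {S : Type} m (k u : S -> C) : 0 < m -> uniformly_positive m k ->
  fmul (fmul u (recip m k)) k = u.
Proof.
  intros Hm Hk. apply functional_extensionality; intro x. unfold fmul, recip.
  destruct (Hk x) as [Hi Hr]. rewrite Rmax_left by lra.
  apply Cext; simpl; rewrite Hi; field; lra.
Qed.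

(** * Bounded continuous functions and the characters of CB(S) *)

Section BoundedContinuous.

Variables (S : Type) (open : (S -> Prop) -> Prop).
Hypothesis Htop : is_topology open.

Lemma CB_const c : CB open (fun _ : S => c).
Proof.
  destruct Htop as [HT _]. split.
  - intros x eps He. exists (fun _ => True). split; [exact HT|]. split; [exact I|].
    intros y _. replace (Cadd c (Copp c)) with C0 by (apply Cext; simpl; ring).
    rewrite Cabs_C0. lra.
  - exists (Cabs c). intros _. lra.
Qed.

Lemma CB_comp h f g : tame h -> CB open f -> CB open g -> CB open (fun x => h (f x) (g x)).
Proof.
  intros [[ContRe BndRe] [ContIm BndIm]] [Cf [Kf HKf]] [Cg [Kg HKg]].
  destruct Htop as [_ [Hinter _]]. split.
  - intros x eps He.
    destruct (ContRe (f x) (g x) (eps / 2)) as [d1 [Hd1 P1]]; [lra|].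
    destruct (ContIm (f x) (g x) (eps / 2)) as [d2 [Hd2 P2]]; [lra|].
    set (d := Rmin d1 d2). assert (Hd : 0 < d) by now apply Rmin_pos.
    assert (d <= d1) by apply Rmin_l. assert (d <= d2) by apply Rmin_r.
    destruct (Cf x d Hd) as [U [HU [Ux PU]]]. destruct (Cg x d Hd) as [V [HV [Vx PV]]].
    exists (fun y => U y /\ V y). split; [now apply Hinter|]. split; [now split|].
    intros y [Uy Vy]. specialize (PU y Uy). specialize (PV y Vy).
    specialize (P1 (f y) (g y) ltac:(lra) ltac:(lra)).
    specialize (P2 (f y) (g y) ltac:(lra) ltac:(lra)).
    eapply Rle_lt_trans; [apply Cabs_le_sum|]. simpl. unfold Rminus in P1, P2. lra.
  - set (K := Rmax Kf Kg).
    destruct (BndRe K) as [A HA]. destruct (BndIm K) as [B HB]. exists (A + B). intro x.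
    assert (Bf : Cabs (f x) <= K) by (eapply Rle_trans; [apply HKf|apply Rmax_l]).
    assert (Bg : Cabs (g x) <= K) by (eapply Rle_trans; [apply HKg|apply Rmax_r]).
    specialize (HA _ _ Bf Bg). specialize (HB _ _ Bf Bg).
    eapply Rle_trans; [apply Cabs_le_sum|]. lra.
Qed.

Lemma CB_add u v : CB open u -> CB open v -> CB open (fadd u v).
Proof. intros. now apply (CB_comp _ u v tame_add). Qed.

Lemma CB_conjf u : CB open u -> CB open (conjf u).
Proof. intro Hu. exact (CB_comp _ u u tame_conj Hu Hu). Qed.

Lemma CB_normsq u : CB open u -> CB open (normsq u).
Proof. intros. apply (CB_comp _ (conjf u) u tame_mul); auto using CB_conjf. Qed.

Lemma CB_sub u a : CB open u -> CB open (fun x => Cadd (u x) (Copp a)).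
Proof. intros. now apply (CB_comp _ u u (tame_sub a)). Qed.

Section Character.

Variable mu : (S -> C) -> C.
Hypothesis Hmu : in_betaS open mu.

Lemma character_one : mu (fun _ => C1) = C1.
Proof.
  destruct Hmu as [_ [_ [Hmul [f0 [Hf0 Hn]]]]].
  pose proof (Hmul (fun _ => C1) f0 (CB_const C1) Hf0) as E.
  replace (fmul (fun _ : S => C1) f0) with f0 in E
    by (apply functional_extensionality; intro x; apply Cext; simpl; ring).
  now apply (Cmul_fixed_one _ (mu f0)).
Qed.

Lemma character_const c : mu (fun _ => c) = c.
Proof.
  pose proof character_one as H1. destruct Hmu as [_ [Hscal _]].
  pose proof (Hscal c (fun _ => C1) (CB_const C1)) as E.
  replace (fscal c (fun _ : S => C1)) with (fun _ : S => c) in E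
    by (apply functional_extensionality; intro x; apply Cext; simpl; ring).
  rewrite E, H1. apply Cext; simpl; ring.
Qed.

(** A function bounded below by [m > 0] is invertible in CB(S), so no
    character vanishes on it. *)
Lemma character_nonvanishing m W : CB open W -> 0 < m -> uniformly_positive m W ->
  mu W <> C0.
Proof.
  intros HW Hm HWm E.
  assert (Hv : CB open (recip m W)) by now apply (CB_comp _ W W (tame_recip m Hm)).
  pose proof character_one as H1. destruct Hmu as [_ [_ [Hmul _]]].
  rewrite <- (recip_inverse m W Hm HWm), Hmul, E in H1 by assumption.
  assert (R1 : Re (Cmul (mu (recip m W)) C0) = Re C1) by now rewrite H1.
  simpl in R1. lra.
Qed.

Lemma character_deviation u : CB open u ->
  mu (normsq (fun x => Cadd (u x) (Copp (mu u)))) = C0.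
Proof.
  intros Hu. pose proof (character_const (Copp (mu u))) as Hc.
  pose proof (CB_sub u (mu u) Hu) as Hd.
  destruct Hmu as [Hadd [_ [Hmul _]]].
  assert (E : mu (fun x => Cadd (u x) (Copp (mu u))) = C0).
  { change (fun x => Cadd (u x) (Copp (mu u))) with (fadd u (fun _ => Copp (mu u))).
    rewrite (Hadd u (fun _ => Copp (mu u)) Hu (CB_const _)), Hc. apply Cext; simpl; ring. }
  unfold normsq. rewrite (Hmul _ _ (CB_conjf _ Hd) Hd), E.
  apply Cext; simpl; ring.
Qed.

(** Otherwise the sum of the squared
    deviations of [f], [g] and [h o (f, g)] would be a function bounded below
    by a positive constant on which [mu] vanishes. *)
Lemma character_tame h f g : tame h -> CB open f -> CB open g ->
  mu (fun x => h (f x) (g x)) = h (mu f) (mu g).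
Proof.
  intros Hh Hf Hg.
  set (H := fun x => h (f x) (g x)).
  assert (HH : CB open H) by now apply CB_comp.
  destruct (classic (mu H = h (mu f) (mu g))) as [E|NE]; [exact E|exfalso].
  destruct (tame_separation h (mu f) (mu g) (mu H) Hh NE) as [m [Hm Sep]].
  set (dev := fun u : S -> C => normsq (fun x => Cadd (u x) (Copp (mu u)))).
  set (W := fadd (fadd (dev f) (dev g)) (dev H)).
  assert (Hdev : forall u, CB open u -> CB open (dev u))
    by (intros u Hu; now apply CB_normsq, CB_sub).
  assert (HW : CB open W) by (unfold W; repeat apply CB_add; auto).
  apply (character_nonvanishing m W HW Hm).
  - intro x. unfold W, dev, fadd. rewrite !normsq_pt. simpl. split; [ring|].
    specialize (Sep (f x) (g x)). fold (H x) in Sep. lra.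
  - destruct Hmu as [Hadd _]. unfold W.
    rewrite !Hadd by (try apply CB_add; auto).
    unfold dev. rewrite !character_deviation by assumption.
    apply Cext; simpl; ring.
Qed.

End Character.

End BoundedContinuous.

(** * The algebra Lmc(S)

    From now on [S] carries a topology for which the left translations are
    continuous. *)

Section Lmc.

Variables (S : Type) (mul : S -> S -> S) (open : (S -> Prop) -> Prop).
Hypothesis Htop : is_topology open.
Hypothesis Hleft : forall s, continuous_map open (fun x => mul s x).

Lemma CB_shift s f : CB open f -> CB open (Lshift mul s f).
Proof.
  intros [Cf [K HK]]. split.
  - intros x eps He. destruct (Cf (mul s x) eps He) as [U [HU [Ux PU]]].
    exists (fun y => U (mul s y)). split; [exact (Hleft s U HU)|]. split; [exact Ux|].
    intros y Uy. exact (PU _ Uy).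
  - exists K. intro x. apply HK.
Qed.

(** Lmc(S) is stable under tame operations: by [character_tame],
    [T_mu (h o (f, g)) = h o (T_mu f, T_mu g)]. *)
Lemma Lmc_comp h f g : tame h -> Lmc mul open f -> Lmc mul open g ->
  Lmc mul open (fun x => h (f x) (g x)).
Proof.
  intros Hh [Cf Tf] [Cg Tg]. split; [now apply CB_comp|].
  intros mu Hmu.
  replace (Tmu mul mu (fun x => h (f x) (g x)))
    with (fun s => h (Tmu mul mu f s) (Tmu mul mu g s)); [apply CB_comp; auto|].
  apply functional_extensionality; intro s. symmetry.
  exact (character_tame S open Htop mu Hmu h _ _ Hh (CB_shift s f Cf) (CB_shift s g Cg)).
Qed.

Lemma Lmc_const c : Lmc mul open (fun _ => c).
Proof.
  split; [now apply CB_const|]. intros mu Hmu.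
  replace (Tmu mul mu (fun _ => c)) with (fun _ : S => c); [now apply CB_const|].
  apply functional_extensionality; intro s. symmetry. exact (character_const S open Htop mu Hmu c).
Qed.

Lemma Lmc_add u v : Lmc mul open u -> Lmc mul open v -> Lmc mul open (fadd u v).
Proof. intros. now apply (Lmc_comp _ u v tame_add). Qed.

Lemma Lmc_mul u v : Lmc mul open u -> Lmc mul open v -> Lmc mul open (fmul u v).
Proof. intros. now apply (Lmc_comp _ u v tame_mul). Qed.

Lemma Lmc_conjf u : Lmc mul open u -> Lmc mul open (conjf u).
Proof. intro Hu. exact (Lmc_comp _ u u tame_conj Hu Hu). Qed.

Lemma Lmc_bounded h : Lmc mul open h -> exists K, 0 < K /\ forall x, Cabs (h x) <= K.
Proof.
  intros [[_ [K HK]] _]. exists (Rabs K + 1). split; [pose proof (Rabs_pos K); lra|].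
  intro x. specialize (HK x). pose proof (Rle_abs K). lra.
Qed.

Lemma ideal_normsq I g : is_ideal mul open I -> I g -> I (normsq g).
Proof. intros [Hl [_ [_ Hmul]]] Hg. apply Hmul; [apply Lmc_conjf, Hl|]; exact Hg. Qed.

(** An ideal containing a function bounded below by [m > 0] contains
    its inverse times anything, hence all of Lmc(S). *)
Lemma ideal_full I k m : is_ideal mul open I -> I k -> 0 < m -> uniformly_positive m k ->
  forall f, Lmc mul open f -> I f.
Proof.
  intros HI Hk Hm Hkm f Hf. pose proof HI as [Hl [_ [_ Hmul]]].
  assert (Hv : Lmc mul open (recip m k))
    by exact (Lmc_comp _ k k (tame_recip m Hm) (Hl k Hk) (Hl k Hk)).
  rewrite <- (recip_mul m k f Hm Hkm). apply Hmul; [now apply Lmc_mul|exact Hk].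
Qed.

Lemma proper_ideal_no_positive I k m : proper_ideal mul open I -> I k -> 0 < m ->
  uniformly_positive m k -> False.
Proof. intros [HI [f [Hf Hn]]] Hk Hm Hkm. exact (Hn (ideal_full I k m HI Hk Hm Hkm f Hf)). Qed.

Lemma ZLmc_Eeps f eta : Lmc mul open f -> ZLmc mul open (Eeps eta f).
Proof.
  intro Hf. exists (fun x => mkC (Rmax (Cabs (f x) - eta) 0) 0).
  split; [exact (Lmc_comp _ f f (tame_excess eta) Hf Hf)|].
  apply functional_extensionality; intro x. apply propositional_extensionality.
  unfold Eeps, zero_set. split; intro H.
  - rewrite Rmax_right by lra. reflexivity.
  - assert (R0 : Re (mkC (Rmax (Cabs (f x) - eta) 0) 0) = Re C0) by now rewrite H.
    simpl in R0. unfold Rmax in R0. destruct Rle_dec; lra.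
Qed.

Lemma ZLmc_full : ZLmc mul open (fun _ => True).
Proof.
  exists fzero. split; [apply Lmc_const|].
  apply functional_extensionality; intro x. apply propositional_extensionality.
  unfold zero_set, fzero. tauto.
Qed.

Lemma normsq_sum_pt (u v : S -> C) x :
  fadd (normsq u) (normsq v) x = mkC (Cabs (u x) * Cabs (u x) + Cabs (v x) * Cabs (v x)) 0.
Proof. unfold fadd. rewrite !normsq_pt. apply Cext; simpl; ring. Qed.

Lemma zero_set_normsq_sum (u v : S -> C) :
  zero_set (fadd (normsq u) (normsq v)) = fun x => zero_set u x /\ zero_set v x.
Proof.
  apply functional_extensionality; intro x. apply propositional_extensionality.
  unfold zero_set. rewrite normsq_sum_pt.
  pose proof (Cabs_ge0 (u x)); pose proof (Cabs_ge0 (v x)). split.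
  - intro E. assert (R0 : Re (mkC (Cabs (u x) * Cabs (u x) + Cabs (v x) * Cabs (v x)) 0) = Re C0)
      by now rewrite E.
    simpl in R0. split; apply Cabs_eq0; nra.
  - intros [-> ->]. rewrite Cabs_C0. apply Cext; simpl; ring.
Qed.

Lemma Eeps_normsq_sum d (u v : S -> C) x : 0 <= d ->
  Eeps (d * d) (fadd (normsq u) (normsq v)) x -> Eeps d u x /\ Eeps d v x.
Proof.
  unfold Eeps. rewrite normsq_sum_pt.
  pose proof (Cabs_ge0 (u x)); pose proof (Cabs_ge0 (v x)).
  rewrite Cabs_nonneg_real by nra. intros. split; nra.
Qed.

Lemma ZLmc_inter Z1 Z2 : ZLmc mul open Z1 -> ZLmc mul open Z2 ->
  ZLmc mul open (fun x => Z1 x /\ Z2 x).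
Proof.
  intros [z1 [L1 ->]] [z2 [L2 ->]]. exists (fadd (normsq z1) (normsq z2)).
  split; [apply Lmc_add; apply Lmc_mul; auto using Lmc_conjf|].
  symmetry. apply zero_set_normsq_sum.
Qed.

(** ** The e-filter generated by an ideal *)

Definition efilter_of (J : (S -> C) -> Prop) : (S -> Prop) -> Prop :=
  fun Z => ZLmc mul open Z /\ exists g d, J g /\ 0 < d /\ forall x, Eeps d g x -> Z x.

Lemma efilter_of_z_filter J : proper_ideal mul open J -> z_filter mul open (efilter_of J).
Proof.
  intro HJ. pose proof HJ as [HI _]. pose proof HI as [_ [J0 [Jadd _]]].
  split; [|split; [|split; [|split]]].
  - now intros Z [HZ _].
  - intros [_ [g [d [Jg [Hd Empty]]]]].
    apply (proper_ideal_no_positive J (normsq g) (d * d) HJ); [now apply ideal_normsq|nra|].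
    intro x. rewrite normsq_pt. simpl. split; [reflexivity|].
    destruct (Rle_dec (Cabs (g x)) d) as [Le|Gt]; [exfalso; exact (Empty x Le)|nra].
  - split; [exact ZLmc_full|]. exists fzero, 1. repeat split; [exact J0|lra].
  - intros Z1 Z2 [HZ1 [g1 [d1 [J1 [Hd1 P1]]]]] [HZ2 [g2 [d2 [J2 [Hd2 P2]]]]].
    split; [now apply ZLmc_inter|].
    set (d := Rmin d1 d2). assert (Hd : 0 < d) by now apply Rmin_pos.
    assert (d <= d1) by apply Rmin_l. assert (d <= d2) by apply Rmin_r.
    exists (fadd (normsq g1) (normsq g2)), (d * d).
    split; [apply Jadd; now apply ideal_normsq|]. split; [nra|].
    intros x Hx. destruct (Eeps_normsq_sum d g1 g2 x ltac:(lra) Hx) as [E1 E2].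
    unfold Eeps in *. split; [apply P1|apply P2]; lra.
  - intros Z1 Z2 [_ [g [d [Jg [Hd P]]]]] HZ2 Inc.
    split; [exact HZ2|]. exists g, d. auto.
Qed.

(** Every member [Z] of [efilter_of J] is of the form [E_d(k)] with [k] in
    [E^-(efilter_of J)]: take [k = min(|g|, d) + |z|] where [Z = Z(z)]. *)
Lemma efilter_of_Efam J Z : is_ideal mul open J ->
  Efam (Eminus mul open (efilter_of J)) Z <-> efilter_of J Z.
Proof.
  intro HJ. split.
  - intros [f [eps [[_ Hf] [He ->]]]]. now apply Hf.
  - intros [[z [Lz ->]] [g [d [Jg [Hd P]]]]].
    assert (Lg : Lmc mul open g) by now apply HJ.
    set (k := fun x => mkC (Rmin (Cabs (g x)) d + Cabs (z x)) 0).
    assert (Kx : forall x, Cabs (k x) = Rmin (Cabs (g x)) d + Cabs (z x)).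
    { intro x. apply Cabs_nonneg_real.
      pose proof (Cabs_ge0 (g x)); pose proof (Cabs_ge0 (z x)).
      unfold Rmin; destruct Rle_dec; lra. }
    exists k, d. split; [split|split; [exact Hd|]].
    + exact (Lmc_comp _ g z (tame_capped_sum d) Lg Lz).
    + intros eta Heta. split; [apply ZLmc_Eeps, (Lmc_comp _ g z (tame_capped_sum d) Lg Lz)|].
      exists g, (Rmin eta d). split; [exact Jg|]. split; [now apply Rmin_pos|].
      intros x Hx. unfold Eeps in *.
      pose proof (Rmin_l eta d); pose proof (Rmin_r eta d).
      pose proof (Rmin_l (Cabs (g x)) d).
      rewrite Kx, (P x ltac:(lra)), Cabs_C0. lra.
    + apply functional_extensionality; intro x. apply propositional_extensionality.
      unfold zero_set, Eeps. rewrite Kx. pose proof (Cabs_ge0 (z x)). split.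
      * intros ->. rewrite Cabs_C0. pose proof (Rmin_r (Cabs (g x)) d). lra.
      * intro Hk. destruct (Rle_dec (Cabs (g x)) d) as [Le|Gt]; [now apply P|].
        rewrite Rmin_right in Hk by lra. apply Cabs_eq0. lra.
Qed.

Lemma efilter_of_e_filter J : proper_ideal mul open J -> e_filter mul open (efilter_of J).
Proof.
  intro HJ. split; [now apply efilter_of_z_filter|].
  intro Z. apply efilter_of_Efam. apply HJ.
Qed.

Lemma Eminus_proper A : z_filter mul open A -> proper_ideal mul open (Eminus mul open A).
Proof.
  intros [HZ [Hempty [Hfull [Hinter Hup]]]].
  split; [split; [|split; [|split]]|].
  - now intros f [Hf _].
  - split; [apply Lmc_const|]. intros eps He.
    replace (Eeps eps fzero) with (fun _ : S => True); [exact Hfull|].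
    apply functional_extensionality; intro x. apply propositional_extensionality.
    unfold Eeps, fzero. rewrite Cabs_C0. split; intros; [lra|exact I].
  - intros f g [Lf Hf] [Lg Hg]. split; [now apply Lmc_add|]. intros eps He.
    apply (Hup (fun x => Eeps (eps / 2) f x /\ Eeps (eps / 2) g x)).
    + apply Hinter; [apply Hf|apply Hg]; lra.
    + now apply ZLmc_Eeps, Lmc_add.
    + intros x [Ef Eg]. unfold Eeps, fadd in *. pose proof (Cabs_triangle (f x) (g x)). lra.
  - intros h f Lh [Lf Hf]. split; [now apply Lmc_mul|]. intros eps He.
    destruct (Lmc_bounded h Lh) as [K [HK Hb]].
    apply (Hup (Eeps (eps / K) f)).
    + apply Hf. now apply Rdiv_lt_0_compat.
    + now apply ZLmc_Eeps, Lmc_mul.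
    + intros x Hx. unfold Eeps, fmul in *. rewrite Cabs_mul.
      apply Rle_trans with (K * (eps / K)); [|right; field; lra].
      apply Rmult_le_compat; auto using Cabs_ge0.
  - exists (fun _ => C1). split; [apply Lmc_const|]. intros [_ H].
    apply Hempty. replace (fun _ : S => False) with (Eeps (1 / 2) (fun _ : S => C1)).
    + apply H. lra.
    + apply functional_extensionality; intro x. apply propositional_extensionality.
      unfold Eeps. rewrite Cabs_C1. split; intros; lra.
Qed.

Lemma Eeps_in_efilter_of J f eps : is_ideal mul open J -> J f -> 0 < eps ->
  efilter_of J (Eeps eps f).
Proof.
  intros HJ Jf He. split; [apply ZLmc_Eeps; now apply HJ|]. exists f, eps. auto.
Qed.

Definition ideal_extend (M : (S -> C) -> Prop) (f : S -> C) : (S -> C) -> Prop :=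
  fun u => exists m h, M m /\ Lmc mul open h /\ u = fadd m (fmul h f).

Lemma ideal_extend_ideal M f : is_ideal mul open M -> Lmc mul open f ->
  is_ideal mul open (ideal_extend M f).
Proof.
  intros [Hl [H0 [Hadd Hmul]]] Lf. split; [|split; [|split]].
  - intros u [m [h [Mm [Lh ->]]]]. apply Lmc_add; [now apply Hl|now apply Lmc_mul].
  - exists fzero, fzero. split; [exact H0|]. split; [apply Lmc_const|].
    apply functional_extensionality; intro x. apply Cext; simpl; ring.
  - intros u v [m1 [h1 [M1 [L1 ->]]]] [m2 [h2 [M2 [L2 ->]]]].
    exists (fadd m1 m2), (fadd h1 h2). split; [now apply Hadd|]. split; [now apply Lmc_add|].
    apply functional_extensionality; intro x. apply Cext; simpl; ring.
  - intros k u Lk [m [h [Mm [Lh ->]]]].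
    exists (fmul k m), (fmul k h). split; [now apply Hmul|]. split; [now apply Lmc_mul|].
    apply functional_extensionality; intro x. apply Cext; simpl; ring.
Qed.

(** A maximal ideal contains every [f] such that each [E_eps(f)] contains
    some [E_d(g)] with [g] in [M]: otherwise [M + Lmc(S) f] would be proper,
    but it contains [1 = m + h f], and then [|m|^2 + |g|^2] (with [g] chosen
    for [eps = 1 / (2 sup |h|)]) is an element of [M] bounded below. *)
Lemma maximal_closed M f : maximal_ideal mul open M -> Lmc mul open f ->
  (forall eps, 0 < eps -> exists g d, M g /\ 0 < d /\ forall x, Eeps d g x -> Eeps eps f x) ->
  M f.
Proof.
  intros [HMp Hmax] Lf Hf. pose proof HMp as [HM _]. pose proof HM as [_ [_ [Hadd _]]].
  apply (Hmax (ideal_extend M f)).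
  - split; [now apply ideal_extend_ideal|].
    exists (fun _ => C1). split; [apply Lmc_const|]. intros [m [h [Mm [Lh E]]]].
    destruct (Lmc_bounded h Lh) as [K [HK Hb]].
    destruct (Hf (/ (2 * K))) as [g [d [Mg [Hd P]]]]; [apply Rinv_0_lt_compat; lra|].
    apply (proper_ideal_no_positive M (fadd (normsq m) (normsq g)) (Rmin (1 / 4) (d * d)) HMp).
    + apply Hadd; now apply ideal_normsq.
    + apply Rmin_pos; nra.
    + intro x. rewrite normsq_sum_pt. simpl. split; [reflexivity|].
      pose proof (Rmin_l (1 / 4) (d * d)); pose proof (Rmin_r (1 / 4) (d * d)).
      pose proof (Cabs_ge0 (m x)); pose proof (Cabs_ge0 (g x)).
      destruct (Rle_dec (Cabs (g x)) d) as [Lg|Lg]; [|nra].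
      assert (Small : Cabs (h x) * Cabs (f x) <= 1 / 2).
      { apply Rle_trans with (K * / (2 * K)); [|right; field; lra].
        apply Rmult_le_compat; auto using Cabs_ge0. apply (P x Lg). }
      assert (One : 1 <= Cabs (m x) + Cabs (h x) * Cabs (f x)).
      { rewrite <- Cabs_C1, <- Cabs_mul.
        replace C1 with (fadd m (fmul h f) x) by (now rewrite <- E).
        apply Cabs_triangle. }
      nra.
  - intros u Mu. exists u, fzero. split; [exact Mu|]. split; [apply Lmc_const|].
    apply functional_extensionality; intro x. apply Cext; simpl; ring.
  - exists fzero, (fun _ => C1). split; [now apply HM|]. split; [apply Lmc_const|].
    apply functional_extensionality; intro x. apply Cext; simpl; ring.
Qed.

Lemma Eminus_efilter_of_maximal M f : maximal_ideal mul open M ->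
  Eminus mul open (efilter_of M) f -> M f.
Proof.
  intros HM [Lf Hf]. apply maximal_closed; [exact HM|exact Lf|].
  intros eps He. destruct (Hf eps He) as [_ [g [d [Mg [Hd P]]]]]. now exists g, d.
Qed.

Lemma Efam_maximal M : maximal_ideal mul open M -> Efam M = efilter_of M.
Proof.
  intro HM. pose proof HM as [[HI _] _].
  apply functional_extensionality; intro Z. apply propositional_extensionality. split.
  - intros [f [eps [Mf [He ->]]]]. now apply Eeps_in_efilter_of.
  - intro HZ. apply (efilter_of_Efam M Z HI) in HZ.
    destruct HZ as [k [eps [Hk [He ->]]]].
    exists k, eps. split; [now apply Eminus_efilter_of_maximal|]. now split.
Qed.

Lemma maximal_e_ultrafilter M : maximal_ideal mul open M -> e_ultrafilter mul open (Efam M).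
Proof.
  intro HM. pose proof HM as [HMp Hmax]. pose proof HMp as [HI _].
  rewrite (Efam_maximal M HM). split; [now apply efilter_of_e_filter|].
  intros B [HBz HBe] Inc Z BZ.
  assert (Sub : forall f, M f -> Eminus mul open B f).
  { intros f Mf. split; [now apply HI|]. intros eps He. apply Inc.
    now apply Eeps_in_efilter_of. }
  pose proof (Hmax _ (Eminus_proper B HBz) Sub) as Back.
  apply HBe in BZ. destruct BZ as [k [eps [Hk [He ->]]]].
  apply Eeps_in_efilter_of; auto.
Qed.

Lemma e_ultrafilter_maximal A :
  e_ultrafilter mul open A -> maximal_ideal mul open (Eminus mul open A).
Proof.
  intros [[HZ He] Hult]. split; [now apply Eminus_proper|].
  intros J HJ Inc f Jf. pose proof HJ as [HI _].
  assert (Sub : forall Z, A Z -> efilter_of J Z).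
  { intros Z AZ. apply He in AZ. destruct AZ as [g [eps [Hg [Heps ->]]]].
    apply Eeps_in_efilter_of; auto. }
  split; [now apply HI|]. intros eps Heps.
  apply (Hult _ (efilter_of_e_filter J HJ) Sub). now apply Eeps_in_efilter_of.
Qed.

Lemma Efam_reflects_maximal Ma Mb : maximal_ideal mul open Ma -> maximal_ideal mul open Mb ->
  (forall Z, Efam Ma Z -> Efam Mb Z) -> forall f, Ma f -> Mb f.
Proof.
  intros Ha Hb Inc f Mf. pose proof Ha as [[[Hl _] _] _].
  apply Eminus_efilter_of_maximal; [exact Hb|]. split; [now apply Hl|].
  intros eps He. rewrite <- (Efam_maximal Mb Hb). apply Inc. now exists f, eps.
Qed.

End Lmc.

Theorem theorem2p9 (S : Type) (mul : S -> S -> S) (open : (S -> Prop) -> Prop)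
  (HS : semitop_semigroup mul open) :
  (forall M, maximal_ideal mul open M -> e_ultrafilter mul open (Efam M)) /\
  (forall A, e_ultrafilter mul open A -> maximal_ideal mul open (Eminus mul open A)) /\
  (forall M1 M2, maximal_ideal mul open M1 -> maximal_ideal mul open M2 ->
     (forall Z, Efam M1 Z <-> Efam M2 Z) -> forall f, M1 f <-> M2 f) /\
  (forall A, e_ultrafilter mul open A ->
     exists M, maximal_ideal mul open M /\ forall Z, Efam M Z <-> A Z).
Proof.
  destruct HS as [Htop [_ [_ [Hleft _]]]].
  split; [|split; [|split]].
  - exact (maximal_e_ultrafilter S mul open Htop Hleft).
  - exact (e_ultrafilter_maximal S mul open Htop Hleft).
  - intros M1 M2 H1 H2 E f.
    split; apply (Efam_reflects_maximal S mul open Htop Hleft); auto; intro Z; apply E.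
  - intros A HA. exists (Eminus mul open A).
    split; [exact (e_ultrafilter_maximal S mul open Htop Hleft A HA)|].
    destruct HA as [[_ He] _]. exact He.
Qed.
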